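(* Under Strategy 1 (described in the context), let $U_s(\omega)$ be the number of uncles created during the attack cycle $\omega$ that are referred by nephew blocks mined by the attacker, in $\omega$ or in a later cycle. Then $$\mathbb{E}[U_s]=q+\frac{q^3\gamma}{p-q}-\frac{pq^2}{p-q}\Bigl(\frac qp\Bigr)^{n_1-1}\gamma-q^{n_1+1}(1-\gamma)-\left[p^2q+\bigl(p+(1-\gamma)p^2q\bigr)\left(\frac{q^2}{p}\bigl(1-q^{n_1-1}\bigr)\gamma+(1-\gamma)pq^2\frac{1-(pq)^{n_1-1}}{1-pq}\right)\right].$$
   Context: Honest hashrate $p$, attacker hashrate $q$, $p+q=1$, $0<q<p$; $\gamma\in[0,1]$ is the fraction of honest hashrate mining on the attacker's block during a public competition between equal-height blocks. Attack cycles are i.i.d. words in S (attacker block) and H (honest block): H, SHS, SHH, or SSwH with $w$ a Dyck word; $\mathbb{P}[H]=p$, $\mathbb{P}[SHS]=pq^2$, $\mathbb{P}[SHH]=p^2q$, $\mathbb{P}[SSwH]=q^2p(pq)^{|w|}$ ($|w|$ half the length of $w$). In SHH the second honest block is built on the attacker's block with probability $\gamma$ and on the first honest block with probability $1-\gamma$. Ethereum rules: an uncle is a non-official block whose parent is official; a nephew (official block) may refer an uncle at distance (height difference) at most $n_1$ ($n_1\ge2$ an integer); every referred uncle is referred by exactly one nephew, mined either by the attacker or by the honest miners. Strategy 1: the attacker withholds his blocks, and each time the honest miners publish a block he publishes the part of his secret fork of the same height as the public honest chain (a fraction $\gamma$ of honest hashrate then mines on the attacker's branch); the attacker's fork wins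 in cycles starting with SS; all miners refer all possible uncles. *)

From Stdlib Require Import Reals List Arith Bool.
Import ListNotations.
Open Scope R_scope.

(** Randomness: an i.i.d. sequence of mining events.  Each new block is
    mined by the attacker with probability q ([evS]) or by the honest
    miners with probability p ([evH b]); the boolean [b] records on which
    branch the honest block is built when there is a public competition:
    [b = true] (probability gamma) = on the attacker's published branch,
    [b = false] (probability 1-gamma) = on the honest branch.  When there
    is no competition the coin is simply ignored. *)

Inductive ev : Type := evS | evH (b : bool).

Definition ev_weight (p gamma : R) (q : R) (e : ev) : R :=
  match e with
  | evS => q
  | evH true => p * gamma
  | evH false => p * (1 - gamma)
  end.

Definition seq_prob (p q gamma : R) (s : list ev) : R :=
  fold_right (fun e acc => ev_weight p gamma q e * acc) 1 s.

Fixpoint all_seqs (n : nat) : list (list ev) :=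
  match n with
  | O => [nil]
  | S n' => flat_map (fun s => [evS :: s; evH true :: s; evH false :: s])
                     (all_seqs n')
  end.

(** * Attack cycles: H, SHS, SHH, SSwH (w a Dyck word). *)

(** In a cycle starting with SS, [d] = (attacker blocks) - (honest blocks);
    the cycle ends with the honest block bringing [d] from 2 to 1.
    Returns the number of events consumed. *)
Fixpoint ss_end (d : nat) (l : list ev) : option nat :=
  match l with
  | nil => None
  | evS :: l' => option_map S (ss_end (S d) l')
  | evH _ :: l' => if Nat.eqb d 2 then Some 1%nat else option_map S (ss_end (pred d) l')
  end.

Definition cycle_len (l : list ev) : option nat :=
  match l with
  | evH _ :: _ => Some 1%nat
  | evS :: evH _ :: _ :: _ => Some 3%nat
  | evS :: evS :: l' => option_map (plus 2) (ss_end 2 l')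
  | _ => None
  end.

Fixpoint split_cycles (fuel : nat) (l : list ev) : list (list ev) :=
  match fuel with
  | O => nil
  | S f => match cycle_len l with
           | Some k => firstn k l :: split_cycles f (skipn k l)
           | None => nil
           end
  end.

Record block : Type := Block {
  b_att : bool;
  b_height : nat;
  b_official : bool;
  b_parent_official : bool }.

Definition is_uncle (b : block) : bool :=
  negb (b_official b) && b_parent_official b.

(** Blocks of a cycle starting with SS (attacker's fork wins): the j-th
    attacker block is official at height h0+j; the i-th honest block is at
    height h0+i (public chain), is not official, and its parent is official
    iff it is the first honest block (built on the fork point) or it was
    built on the attacker's published branch. *)
Fixpoint ss_blocks (h0 a i : nat) (l : list ev) : list block :=
  match l with
  | nil => nil
  | evS :: l' => Block true (h0 + S a) true true :: ss_blocks h0 (S a) i l'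
  | evH b :: l' =>
      Block false (h0 + S i) false (Nat.eqb i 0 || b) :: ss_blocks h0 a (S i) l'
  end.

Definition cycle_blocks (h0 : nat) (c : list ev) : list block :=
  match c with
  | [evH _] => [Block false (S h0) true true]
  | [evS; evH _; evS] =>
      [Block true (S h0) true true; Block false (S h0) false true;
       Block true (S (S h0)) true true]
  | [evS; evH _; evH true] =>
      [Block true (S h0) true true; Block false (S h0) false true;
       Block false (S (S h0)) true true]
  | [evS; evH _; evH false] =>
      [Block true (S h0) false true; Block false (S h0) true true;
       Block false (S (S h0)) true true]
  | evS :: evS :: _ => ss_blocks h0 0 0 c
  | _ => nil
  end.

Definition n_official (bs : list block) : nat :=
  length (filter b_official bs).

Fixpoint cycles_blocks (h0 : nat) (cs : list (list ev)) : list block :=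
  match cs with
  | nil => nil
  | c :: cs' => let bs := cycle_blocks h0 c in
                bs ++ cycles_blocks (h0 + n_official bs) cs'
  end.

(** Ethereum rule: the uncle [u] is referred by the first official block
    mined after it at distance (height difference) between 1 and n1. *)
Definition nephew (n1 : nat) (u : block) (later : list block) : option block :=
  find (fun b => b_official b && Nat.ltb (b_height u) (b_height b)
                 && Nat.leb (b_height b) (b_height u + n1)) later.

Fixpoint count_att_refs (n1 : nat) (first later : list block) : nat :=
  match first with
  | nil => O
  | u :: f' =>
      ((if is_uncle u then
          match nephew n1 u (f' ++ later) with
          | Some b => if b_att b then 1 else 0
          | None => 0
          end
        else 0) + count_att_refs n1 f' later)%nat
  end.

(** U_s of the first attack cycle, as determined by the complete cycles of
    the finite event prefix [s] (0 if the first cycle is not complete).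
    This is nondecreasing in the prefix and converges to U_s. *)
Definition Us_prefix (n1 : nat) (s : list ev) : nat :=
  match split_cycles (length s) s with
  | nil => O
  | c :: cs => let bs := cycle_blocks 0 c in
               count_att_refs n1 bs (cycles_blocks (n_official bs) cs)
  end.

Definition ExpUs_N (p q gamma : R) (n1 N : nat) : R :=
  fold_right Rplus 0
    (map (fun s => seq_prob p q gamma s * INR (Us_prefix n1 s)) (all_seqs N)).

From Stdlib Require Import Reals List Arith Bool Lia Lra.
Import ListNotations.

(** Reading the mined blocks one at a time, U_s is the total reward of a finite automaton
    ([ustate]): during an SS cycle it tracks the lead of the attacker's fork and the honest
    uncles within reach (distance at most n1) of the next official block, and it pays them once
    that block is known to be the attacker's, which may be the first official block of the next
    cycle.  Under the i.i.d. mining law this is a Markov reward chain.  If V solves the one-step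
    (Bellman) equation, the expected reward of the first N blocks is
    V(start) - E[V(state after N blocks)]; a Lyapunov function that contracts by a factor
    lam < 1 at each step and dominates V up to a factor linear in the number of pending uncles
    makes this remainder O(N lam^N).  Along the fork the Bellman equation reduces to first-order
    linear recurrences in the lead, solved by geometric sums, and V(start) is the closed form. *)

Open Scope nat_scope.

Lemma find_none_intro {A} (f : A -> bool) L :
  (forall x, In x L -> f x = false) -> find f L = None.
Proof.
  induction L as [|x L IH]; intros Hf; simpl; [reflexivity|].
  rewrite Hf by (left; reflexivity); apply IH; intros y Hy; apply Hf; right; exact Hy.
Qed.

Lemma find_app {A} (f : A -> bool) X Y :
  find f (X ++ Y) = match find f X with Some x => Some x | None => find f Y end.
Proof. induction X as [|x X IH]; simpl; [reflexivity|]. destruct (f x); auto. Qed.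

Definition official_from (h : nat) (L : list block) : Prop :=
  (forall x, In x L -> b_official x = true -> h <= b_height x) /\
  (forall x, find b_official L = Some x -> b_height x = h).

Lemma official_from_nil h : official_from h [].
Proof. split; simpl; [tauto|discriminate]. Qed.

Lemma n_official_find_none X : find b_official X = None -> n_official X = 0.
Proof.
  unfold n_official; induction X as [|x X IH]; simpl; [reflexivity|].
  destruct (b_official x); [discriminate|exact IH].
Qed.

Lemma official_from_app h X Y :
  official_from h X -> official_from (h + n_official X) Y -> official_from h (X ++ Y).
Proof.
  intros [HXh HXf] [HYh HYf]; split.
  - intros x Hx Ox; apply in_app_or in Hx as [Hx|Hx]; [auto|].
    specialize (HYh x Hx Ox); lia.
  - intros x Hx; rewrite find_app in Hx.
    destruct (find b_official X) as [y|] eqn:E; [injection Hx as <-; auto|].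
    rewrite n_official_find_none, Nat.add_0_r in HYf by exact E; auto.
Qed.

Definition nephew_pred (n1 h : nat) (b : block) : bool :=
  b_official b && Nat.ltb h (b_height b) && Nat.leb (b_height b) (h + n1).

Lemma nephew_eq_find n1 u L : nephew n1 u L = find (nephew_pred n1 (b_height u)) L.
Proof. reflexivity. Qed.

Lemma find_nephew_official_from n1 h H L :
  official_from H L -> h < H ->
  find (nephew_pred n1 h) L = if H <=? h + n1 then find b_official L else None.
Proof.
  intros [Hheight Hfirst] Hh; induction L as [|x L IH]; simpl.
  - destruct (H <=? h + n1); reflexivity.
  - unfold nephew_pred at 1; destruct (b_official x) eqn:Ox; simpl.
    + assert (Hx : b_height x = H) by (apply Hfirst; simpl; rewrite Ox; reflexivity).
      rewrite Hx, (proj2 (Nat.ltb_lt h H) Hh); simpl.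
      destruct (H <=? h + n1) eqn:E; [reflexivity|].
      apply Nat.leb_gt in E; apply find_none_intro; intros y Hy; unfold nephew_pred.
      destruct (b_official y) eqn:Oy; [|reflexivity].
      pose proof (Hheight y (in_cons _ _ _ Hy) Oy).
      rewrite (proj2 (Nat.leb_gt _ _)) by lia; apply andb_false_r.
    + apply IH.
      * intros y Hy; apply Hheight; simpl; auto.
      * intros y Hy; apply Hfirst; simpl; rewrite Ox; exact Hy.
Qed.

Definition is_att_event (e : ev) : bool := match e with evS => true | evH _ => false end.

Definition count_att (l : list ev) : nat := length (filter is_att_event l).

Lemma n_official_ss_blocks h0 l : forall a i, n_official (ss_blocks h0 a i l) = count_att l.
Proof.
  unfold n_official, count_att.
  induction l as [|[|c] l IH]; intros a i; simpl; auto.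
Qed.

Lemma official_from_ss_blocks h0 l : forall a i, official_from (h0 + S a) (ss_blocks h0 a i l).
Proof.
  induction l as [|[|c] l IH]; intros a i; simpl.
  - apply official_from_nil.
  - destruct (IH (S a) i) as [Hh Hf]; split.
    + intros x [<-|Hx] Ox; simpl; [lia|]. specialize (Hh x Hx Ox); lia.
    + intros x Hx; injection Hx as <-; reflexivity.
  - destruct (IH a (S i)) as [Hh Hf]; split.
    + intros x [<-|Hx] Ox; [discriminate|auto].
    + exact Hf.
Qed.

Lemma official_from_ss_blocks_app a i l L :
  official_from (S (a + count_att l)) L -> official_from (S a) (ss_blocks 0 a i l ++ L).
Proof.
  intros HL; apply official_from_app; [apply (official_from_ss_blocks 0)|].
  rewrite n_official_ss_blocks; exact HL.
Qed.

Lemma official_from_cycle_blocks h0 c : official_from (S h0) (cycle_blocks h0 c).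
Proof.
  assert (Hss : forall c, official_from (S h0) (ss_blocks h0 0 0 c))
    by (intros c'; rewrite <- Nat.add_1_r; apply official_from_ss_blocks).
  destruct c as [|[|c1] c];
    [| destruct c as [|[|c2] c]; [| |destruct c as [|[|[|]] [|e4 c]]] | destruct c as [|e2 c]];
    first [ apply official_from_nil | apply Hss
          | split; simpl;
            [ intros x Hx Ox; intuition (subst; simpl in *; lia || discriminate)
            | intros x Hx; injection Hx as <-; simpl; lia ] ].
Qed.

Lemma official_from_cycles_blocks cs : forall h0, official_from (S h0) (cycles_blocks h0 cs).
Proof.
  induction cs as [|c cs IH]; intros h0; simpl; [apply official_from_nil|].
  apply official_from_app; [apply official_from_cycle_blocks | apply IH].
Qed.

Lemma split_cycles_S fuel l : split_cycles (S fuel) l =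
  match cycle_len l with
  | Some k => firstn k l :: split_cycles fuel (skipn k l)
  | None => []
  end.
Proof. reflexivity. Qed.

Definition first_official_att (L : list block) : nat :=
  match find b_official L with
  | Some b => if b_att b then 1 else 0
  | None => 0
  end.

Lemma first_official_att_skip u L :
  b_official u = false -> first_official_att (u :: L) = first_official_att L.
Proof. intros Hu; unfold first_official_att; simpl; rewrite Hu; reflexivity. Qed.

(** In [Fork k first paid pending] the fork leads by k + 2 blocks, [first] says that no honest
    block of the cycle has been mined yet, [paid] counts the uncles already referred by an
    attacker block and [pending] those waiting for the next official block.  [Wait b] and its
    successors carry the b uncles pending when the cycle ends: they are paid iff the next cycle
    completes and its first official block is the attacker's. *)
Inductive ustate : Type :=
  | Start | AfterS | AfterSH
  | Fork (k : nat) (first : bool) (paid pending : nat)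
  | Wait (b : nat) | WaitS (b : nat) | WaitSH (b : nat) | WaitSS (k b : nat)
  | Settled.

Section UncleAutomaton.
Variable n1 : nat.

(* An honest block mined at lead k + 2 is an uncle iff it is the first one of the cycle or it
   was built on the attacker's branch; the next official block is k + 2 higher. *)
Definition counted_uncle (k : nat) (first c : bool) : nat :=
  if (first || c) && (S (S k) <=? n1) then 1 else 0.

Definition uncle_reward (x : ustate) (e : ev) : nat :=
  match x, e with
  | AfterSH, evS => 1
  | Fork k _ a _, evH _ => match k with 0 => a | S _ => 0 end
  | WaitSH b, (evS | evH true) => b
  | WaitSS k b, evH _ => match k with 0 => b | S _ => 0 end
  | _, _ => 0
  end.

Definition uncle_step (x : ustate) (e : ev) : ustate :=
  match x, e with
  | Start, evS => AfterS
  | AfterS, evS => Fork 0 true 0 0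
  | AfterS, evH _ => AfterSH
  | Fork k f a b, evS => Fork (S k) f (a + b) 0
  | Fork k f a b, evH c =>
      let b' := b + counted_uncle k f c in
      match k with 0 => Wait b' | S k' => Fork k' false a b' end
  | Wait b, evS => WaitS b
  | WaitS b, evS => WaitSS 0 b
  | WaitS b, evH _ => WaitSH b
  | WaitSS k b, evS => WaitSS (S k) b
  | WaitSS k b, evH _ => match k with 0 => Settled | S k' => WaitSS k' b end
  | _, _ => Settled
  end.

Fixpoint uncle_gain (x : ustate) (s : list ev) : nat :=
  match s with
  | [] => 0
  | e :: s' => uncle_reward x e + uncle_gain (uncle_step x e) s'
  end.

Lemma uncle_gain_settled s : uncle_gain Settled s = 0.
Proof. induction s; simpl; auto. Qed.

Lemma uncle_gain_waitSS s : forall k b,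
  uncle_gain (WaitSS k b) s = match ss_end (S (S k)) s with Some _ => b | None => 0 end.
Proof.
  induction s as [|[|c] s IH]; intros k b; simpl; auto.
  - rewrite IH; destruct (ss_end _ s); reflexivity.
  - destruct k as [|k]; simpl.
    + rewrite uncle_gain_settled; lia.
    + rewrite IH; destruct (ss_end _ s); reflexivity.
Qed.

Lemma uncle_gain_wait b r fuel h0 : length r <= fuel ->
  uncle_gain (Wait b) r = b * first_official_att (cycles_blocks h0 (split_cycles fuel r)).
Proof.
  intros Hfuel.
  destruct r as [|[|c1] r]; [destruct fuel; cbn; lia| |].
  - destruct fuel as [|fuel]; [simpl in Hfuel; lia|].
    destruct r as [|[|c2] r]; [cbn; lia| |].
    + cbn; rewrite uncle_gain_waitSS; destruct (ss_end 2 r); cbn; lia.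
    + destruct r as [|[|[|]] r]; cbn; rewrite ?uncle_gain_settled; lia.
  - destruct fuel; cbn; rewrite uncle_gain_settled; lia.
Qed.

Lemma uncle_gain_fork_incomplete l : forall k f a b,
  ss_end (S (S k)) l = None -> uncle_gain (Fork k f a b) l = 0.
Proof.
  induction l as [|[|c] l IH]; intros k f a b Hend; [reflexivity| |].
  - simpl in Hend |- *; apply IH.
    destruct (ss_end (S (S (S k))) l); [discriminate|reflexivity].
  - destruct k as [|k]; [discriminate|]; simpl in Hend |- *; apply IH.
    destruct (ss_end (S (S k)) l); [discriminate|reflexivity].
Qed.

Lemma count_att_refs_cons u f' L :
  count_att_refs n1 (u :: f') L = count_att_refs n1 [u] (f' ++ L) + count_att_refs n1 f' L.
Proof. simpl; lia. Qed.

Lemma honest_block_att_refs k i c X :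
  official_from (S (i + S (S k))) X ->
  count_att_refs n1 [Block false (S i) false ((i =? 0) || c)] X
  = counted_uncle k (i =? 0) c * first_official_att X.
Proof.
  intros HX; cbn [count_att_refs app is_uncle b_official b_parent_official negb andb].
  rewrite nephew_eq_find; cbn [b_height].
  rewrite (find_nephew_official_from n1 (S i) _ X HX) by lia.
  unfold counted_uncle, first_official_att.
  replace (S (i + S (S k)) <=? S i + n1) with (S (S k) <=? n1)
    by (destruct (Nat.leb_spec (S (S k)) n1), (Nat.leb_spec (S (i + S (S k))) (S i + n1)); lia).
  destruct ((i =? 0) || c), (S (S k) <=? n1); simpl; lia.
Qed.

(* After i honest blocks at lead k + 2, the attacker has mined i + k + 2 blocks. *)
Lemma uncle_gain_fork l : forall k i a b m L,
  ss_end (S (S k)) l = Some m ->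
  official_from (S (i + S (S k) + count_att (firstn m l))) L ->
  (forall c, uncle_gain (Wait c) (skipn m l) = c * first_official_att L) ->
  uncle_gain (Fork k (i =? 0) a b) l
  = a + b * first_official_att (ss_blocks 0 (i + S (S k)) i (firstn m l) ++ L)
    + count_att_refs n1 (ss_blocks 0 (i + S (S k)) i (firstn m l)) L.
Proof.
  induction l as [|[|c] l IH]; intros k i a b m L Hend HL Hwait; [discriminate| |].
  - simpl in Hend; destruct (ss_end (S (S (S k))) l) as [n|] eqn:E; [|discriminate].
    injection Hend as <-; cbn [uncle_gain uncle_reward uncle_step firstn] in *.
    rewrite (IH (S k) i (a + b) 0 n L E); [| |exact Hwait].
    2: replace (i + S (S (S k)) + count_att (firstn n l))
         with (i + S (S k) + count_att (evS :: firstn n l)) by (unfold count_att; simpl; lia);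
       exact HL.
    cbn [ss_blocks count_att_refs is_uncle b_official negb andb app].
    rewrite Nat.add_succ_r; cbn; lia.
  - destruct k as [|k].
    + injection Hend as <-; cbn [uncle_gain uncle_reward uncle_step firstn skipn] in *.
      rewrite Hwait; cbn [ss_blocks app]; change (0 + S i) with (S i).
      rewrite (honest_block_att_refs 0) by (rewrite Nat.add_0_r in HL; exact HL).
      rewrite first_official_att_skip by reflexivity; lia.
    + simpl in Hend; destruct (ss_end (S (S k)) l) as [n|] eqn:E; [|discriminate].
      injection Hend as <-; cbn [uncle_gain uncle_reward uncle_step firstn skipn] in *.
      replace (i + S (S (S k))) with (S i + S (S k)) in * by lia.
      rewrite (IH k (S i) a _ n L E HL Hwait); cbn [ss_blocks]; change (0 + S i) with (S i).
      rewrite count_att_refs_cons, (honest_block_att_refs (S k)).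
      2: replace (i + S (S (S k))) with (S i + S (S k)) by lia;
         apply official_from_ss_blocks_app; exact HL.
      cbn [app]; rewrite first_official_att_skip by reflexivity; lia.
Qed.

Lemma Us_prefix_uncle_gain s : 1 <= n1 -> Us_prefix n1 s = uncle_gain Start s.
Proof.
  intros Hn1; unfold Us_prefix.
  destruct s as [|[|c1] s]; [reflexivity| |cbn; rewrite uncle_gain_settled; reflexivity].
  destruct s as [|[|c2] s]; [reflexivity| |].
  - cbn [length]; rewrite split_cycles_S; cbn [cycle_len].
    destruct (ss_end 2 s) as [m|] eqn:E; cbn [option_map].
    + cbn [Nat.add firstn skipn].
      set (L := cycles_blocks _ (split_cycles (S (length s)) (skipn m s))).
      cbn [cycle_blocks ss_blocks count_att_refs is_uncle b_official negb andb
           uncle_gain uncle_reward uncle_step].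
      change (Fork 0 true 0 0) with (Fork 0 (0 =? 0) 0 0).
      rewrite (uncle_gain_fork s 0 0 0 0 m L E).
      * reflexivity.
      * unfold L; change (cycle_blocks 0 (evS :: evS :: firstn m s))
          with (ss_blocks 0 0 0 (evS :: evS :: firstn m s)).
        rewrite n_official_ss_blocks; apply official_from_cycles_blocks.
      * intros c; apply uncle_gain_wait; rewrite length_skipn; lia.
    + cbn; symmetry; apply uncle_gain_fork_incomplete; exact E.
  - destruct s as [|e3 s]; [reflexivity|].
    destruct n1 as [|n1']; [lia|].
    destruct e3 as [|[|]]; cbn; rewrite ?uncle_gain_settled; reflexivity.
Qed.

End UncleAutomaton.

Open Scope R_scope.

Section Expectation.
Variables p q gamma : R.

Definition step_mean (f : ev -> R) : R :=
  q * f evS + p * gamma * f (evH true) + p * (1 - gamma) * f (evH false).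

Definition expect (g : list ev -> R) (n : nat) : R :=
  fold_right Rplus 0 (map (fun s => seq_prob p q gamma s * g s) (all_seqs n)).

Lemma expect_0 g : expect g 0 = g [].
Proof. unfold expect; simpl; unfold seq_prob; simpl; ring. Qed.

Lemma expect_S g n :
  expect g (S n) = step_mean (fun e => expect (fun s => g (e :: s)) n).
Proof.
  unfold expect, step_mean; simpl.
  induction (all_seqs n) as [|s L IH]; simpl; [ring|].
  rewrite IH; unfold seq_prob; simpl; ring.
Qed.

Lemma step_mean_scale c f : step_mean (fun e => c * f e) = c * step_mean f.
Proof. unfold step_mean; ring. Qed.

Lemma step_mean_const_add (c : R) f :
  p + q = 1 -> step_mean (fun e => c + f e) = c + step_mean f.
Proof. intros Hpq; unfold step_mean; replace q with (1 - p) by lra; ring. Qed.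

Lemma expect_const_add c g n :
  p + q = 1 -> expect (fun s => c + g s) n = c + expect g n.
Proof.
  intros Hpq; revert g; induction n as [|n IH]; intros g.
  - rewrite !expect_0; reflexivity.
  - rewrite !expect_S, <- step_mean_const_add by exact Hpq.
    unfold step_mean; rewrite !IH; reflexivity.
Qed.

Lemma expect_scale c g n : expect (fun s => c * g s) n = c * expect g n.
Proof.
  revert g; induction n as [|n IH]; intros g.
  - rewrite !expect_0; reflexivity.
  - rewrite !expect_S, <- step_mean_scale; unfold step_mean; rewrite !IH; reflexivity.
Qed.

Lemma expect_ext g h n : (forall s, g s = h s) -> expect g n = expect h n.
Proof. intros Hgh; unfold expect; f_equal; apply map_ext; intros s; rewrite Hgh; reflexivity. Qed.

Section Monotonicity.
Hypotheses (Hq : 0 <= q) (Hp : 0 <= p) (Hgamma : 0 <= gamma <= 1).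

Lemma step_mean_le f g : (forall e, f e <= g e) -> step_mean f <= step_mean g.
Proof.
  intros Hfg; unfold step_mean.
  assert (0 <= p * gamma) by nra; assert (0 <= p * (1 - gamma)) by nra.
  pose proof (Hfg evS); pose proof (Hfg (evH true)); pose proof (Hfg (evH false)).
  nra.
Qed.

Lemma expect_le g h n :
  (forall s, length s = n -> g s <= h s) -> expect g n <= expect h n.
Proof.
  revert g h; induction n as [|n IH]; intros g h Hgh.
  - rewrite !expect_0; apply Hgh; reflexivity.
  - rewrite !expect_S; apply step_mean_le.
    intros e; apply IH; intros s Hs; apply Hgh; simpl; rewrite Hs; reflexivity.
Qed.

Lemma expect_abs_le g n : Rabs (expect g n) <= expect (fun s => Rabs (g s)) n.
Proof.
  apply Rabs_le; split.
  - replace (- expect (fun s => Rabs (g s)) n)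
      with (expect (fun s => -1 * Rabs (g s)) n) by (rewrite expect_scale; ring).
    apply expect_le; intros s _; pose proof (Rle_abs (- g s)); rewrite Rabs_Ropp in *; lra.
  - apply expect_le; intros s _; apply Rle_abs.
Qed.

End Monotonicity.
End Expectation.

Lemma cv_0_of_affine_geom_bound (u : nat -> R) (a b lam : R) :
  0 <= lam < 1 -> (forall n, Rabs (u n) <= (a + b * INR n) * lam ^ n) -> Un_cv u 0.
Proof.
  intros Hlam Hu eps Heps.
  set (h := (1 - lam) / 2); set (mu := (1 + h) * lam).
  assert (Hh : 0 < h) by (unfold h; lra).
  assert (Hmu : 0 <= mu < 1) by (unfold mu, h; nra).
  set (C := h * Rabs a + Rabs b + 1).
  assert (HC : 0 < C) by (unfold C; pose proof (Rabs_pos a); pose proof (Rabs_pos b); nra).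
  destruct (pow_lt_1_zero mu ltac:(rewrite Rabs_pos_eq; lra) (eps * h / C))
    as [N HN]; [apply Rdiv_lt_0_compat; nra|].
  exists N; intros n Hn; unfold Rdist; rewrite Rminus_0_r.
  specialize (HN n Hn); rewrite Rabs_pos_eq in HN by (apply pow_le; lra).
  assert (Hlam_n : 0 <= lam ^ n <= mu ^ n).
  { split; [apply pow_le; lra|]. apply pow_incr; unfold mu; nra. }
  (* Bernoulli's inequality n h <= (1 + h)^n gives n h lam^n <= mu^n *)
  assert (Hbern : INR n * h * lam ^ n <= mu ^ n).
  { unfold mu; rewrite Rpow_mult_distr.
    apply Rmult_le_compat_r; [lra|].
    pose proof (poly n h Hh); lra. }
  assert (Hbound : h * ((a + b * INR n) * lam ^ n) <= C * mu ^ n).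
  { pose proof (pos_INR n); pose proof (Rle_abs a); pose proof (Rle_abs b).
    pose proof (Rabs_pos a); pose proof (Rabs_pos b).
    assert (0 <= h * lam ^ n) by nra.
    assert (0 <= INR n * h * lam ^ n) by nra.
    assert (h * a * lam ^ n <= h * Rabs a * mu ^ n).
    { apply Rle_trans with (h * Rabs a * lam ^ n); [|apply Rmult_le_compat_l]; nra. }
    assert (b * (INR n * h * lam ^ n) <= Rabs b * mu ^ n).
    { apply Rle_trans with (Rabs b * (INR n * h * lam ^ n)); [|apply Rmult_le_compat_l]; nra. }
    unfold C; nra. }
  apply Rmult_lt_reg_l with h; [lra|].
  assert (C * mu ^ n < eps * h).
  { apply Rmult_lt_reg_r with (/ C); [apply Rinv_0_lt_compat; lra|].
    rewrite Rmult_comm, <- Rmult_assoc, Rinv_l, Rmult_1_l by lra; exact HN. }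
  pose proof (Hu n); nra.
Qed.

Section RewardChain.
Variables (state : Type) (step : state -> ev -> state) (reward : state -> ev -> R).

Fixpoint total_reward (x : state) (s : list ev) : R :=
  match s with
  | [] => 0
  | e :: s' => reward x e + total_reward (step x e) s'
  end.

Fixpoint final_state (x : state) (s : list ev) : state :=
  match s with
  | [] => x
  | e :: s' => final_state (step x e) s'
  end.

Variables p q gamma : R.
Hypotheses (Hq : 0 <= q) (Hp : 0 <= p) (Hpq : p + q = 1) (Hgamma : 0 <= gamma <= 1).

Variable V : state -> R.
Hypothesis V_bellman :
  forall x, V x = step_mean p q gamma (fun e => reward x e + V (step x e)).

Lemma expect_total_reward n x :
  expect p q gamma (total_reward x) n
  = V x - expect p q gamma (fun s => V (final_state x s)) n.
Proof.
  revert x; induction n as [|n IH]; intros x.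
  - rewrite !expect_0; simpl; ring.
  - rewrite !expect_S; cbn [total_reward final_state].
    rewrite (V_bellman x); unfold step_mean.
    rewrite !expect_const_add, !IH by exact Hpq; ring.
Qed.

Variables (L : state -> R) (lam : R).
Hypotheses (L_nonneg : forall x, 0 <= L x) (Hlam : 0 <= lam < 1).
Hypothesis L_drift : forall x, step_mean p q gamma (fun e => L (step x e)) <= lam * L x.

Lemma expect_lyapunov n x :
  expect p q gamma (fun s => L (final_state x s)) n <= lam ^ n * L x.
Proof.
  revert x; induction n as [|n IH]; intros x.
  - rewrite expect_0; simpl; lra.
  - rewrite expect_S; cbn [final_state].
    apply Rle_trans with (step_mean p q gamma (fun e => lam ^ n * L (step x e))).
    + apply step_mean_le; auto.
    + rewrite step_mean_scale; simpl.
      pose proof (pow_le lam n (proj1 Hlam)); pose proof (L_drift x); nra.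
Qed.

Variable size : state -> nat.
Hypothesis size_step : forall x e, (size (step x e) <= S (size x))%nat.
Variable K : R.
Hypothesis K_nonneg : 0 <= K.
Hypothesis V_bound : forall x, Rabs (V x) <= K * (1 + INR (size x)) * L x.

Lemma size_final_state s x : (size (final_state x s) <= size x + length s)%nat.
Proof.
  revert x; induction s as [|e s IH]; intros x; simpl; [lia|].
  specialize (IH (step x e)); specialize (size_step x e); lia.
Qed.

Lemma expect_total_reward_cv x :
  Un_cv (fun n => expect p q gamma (total_reward x) n) (V x).
Proof.
  assert (Htail : Un_cv (fun n => expect p q gamma (fun s => V (final_state x s)) n) 0).
  { apply cv_0_of_affine_geom_bound with (K * (1 + INR (size x)) * L x) (K * L x) lam;
      [exact Hlam|]; intros n.
    eapply Rle_trans; [apply expect_abs_le; auto|].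
    eapply Rle_trans.
    - apply expect_le with (h := fun s => K * (1 + INR (size x) + INR n) * L (final_state x s));
        auto.
      intros s Hs; eapply Rle_trans; [apply V_bound|].
      apply Rmult_le_compat_r; [apply L_nonneg|]; apply Rmult_le_compat_l; [exact K_nonneg|].
      rewrite <- Hs, Rplus_assoc, <- plus_INR; apply Rplus_le_compat_l, le_INR, size_final_state.
    - rewrite expect_scale.
      pose proof (expect_lyapunov n x); pose proof (pos_INR (size x)); pose proof (pos_INR n).
      assert (0 <= K * (1 + INR (size x) + INR n)) by nra. nra. }
  intros eps Heps; destruct (Htail eps Heps) as [N HN]; exists N; intros n Hn.
  specialize (HN n Hn); unfold Rdist in *; rewrite expect_total_reward.
  replace (V x - expect p q gamma (fun s => V (final_state x s)) n - V x)
    with (- (expect p q gamma (fun s => V (final_state x s)) n - 0)) by ring.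
  rewrite Rabs_Ropp; exact HN.
Qed.

End RewardChain.

Arguments total_reward {state} step reward x s.
Arguments final_state {state} step x s.

Lemma Rabs_le_sum_f_R0_abs (u : nat -> R) n k :
  (k <= n)%nat -> Rabs (u k) <= sum_f_R0 (fun j => Rabs (u j)) n.
Proof.
  induction n as [|n IH]; intros Hk; simpl.
  - replace k with 0%nat by lia; lra.
  - pose proof (Rabs_pos (u (S n))).
    destruct (Nat.eq_dec k (S n)) as [->|Hne]; [|specialize (IH ltac:(lia)); lra].
    pose proof (cond_pos_sum (fun j => Rabs (u j)) n (fun j => Rabs_pos _)); lra.
Qed.

Lemma eventually_const_abs_le (u : nat -> R) N :
  (forall k, (N <= k)%nat -> u k = u N) ->
  forall k, Rabs (u k) <= sum_f_R0 (fun j => Rabs (u j)) N.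
Proof.
  intros Hconst k.
  destruct (Nat.le_gt_cases N k); [rewrite Hconst by lia|]; apply Rabs_le_sum_f_R0_abs; lia.
Qed.

Section UncleValue.
Variables (p q gamma : R) (M : nat).
Hypotheses (Hq : 0 < q) (Hqp : q < p) (Hpq : p + q = 1) (Hgamma : 0 <= gamma <= 1).

Let n1 := S (S M).

(* Probability that the first official block of a cycle is the attacker's: SS, SHS, or SHH
   with the second honest block built on the attacker's block. *)
Definition next_att : R := q * (q + p * (q + p * gamma)).

(* Probability that uncles pending at lead k + 1 get an attacker nephew: an attacker block
   comes before the k honest blocks closing the cycle, or else the next cycle yields one. *)
Definition pay_prob (k : nat) : R := 1 - p ^ k * (1 - next_att).

(* [fork_gain k first] is the expected number of counted uncles still to be mined in a cycle
   at lead k + 2.  Its increments [gain_step] in k and the extra term [first_gain] for the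
   first honest block solve the first-order recurrences [gain_step_rec], [gain_step_last] and
   [first_gain_rec]; the closed forms are their geometric-sum solutions. *)
Definition gain_step (k : nat) : R :=
  gamma * ((1 - (q / p) ^ S (M - k)) / (1 - q / p)
           - (1 - next_att) * p ^ k * (1 - q ^ S (M - k)) / (1 - q)).

Definition first_gain (k : nat) : R :=
  if k <=? M then
    p * (1 - gamma) * ((1 - q ^ S (M - k)) / (1 - q)
                       - (1 - next_att) * p ^ k * (1 - (p * q) ^ S (M - k)) / (1 - p * q))
  else 0.

Definition fork_gain (k : nat) (first : bool) : R :=
  sum_f_R0 gain_step (Nat.min k M) + (if first then first_gain k else 0).

Definition prev_fork_gain (k : nat) : R :=
  match k with 0 => 0 | S k' => fork_gain k' false end.

Lemma one_minus_ratio_neq_0 : 1 - q / p <> 0.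
Proof.
  assert (q / p < 1) by (apply Rmult_lt_reg_r with p; [lra|]; unfold Rdiv;
    rewrite Rmult_assoc, Rinv_l, Rmult_1_r, Rmult_1_l by lra; exact Hqp).
  lra.
Qed.

Lemma one_minus_pq_neq_0 : 1 - p * q <> 0.
Proof. nra. Qed.

Lemma pay_prob_S k : pay_prob (S k) = q + p * pay_prob k.
Proof. unfold pay_prob; simpl; replace q with (1 - p) by lra; ring. Qed.

Lemma gain_step_last : gain_step M = gamma * pay_prob M.
Proof.
  unfold gain_step, pay_prob; rewrite Nat.sub_diag.
  pose proof one_minus_ratio_neq_0; simpl; field; lra.
Qed.

Lemma gain_step_rec k : (k < M)%nat ->
  p * gain_step k = p * gamma * pay_prob k + q * gain_step (S k).
Proof.
  intros Hk; unfold gain_step, pay_prob.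
  replace (M - k)%nat with (S (M - S k)) by lia.
  pose proof one_minus_ratio_neq_0; simpl; field; lra.
Qed.

Lemma first_gain_rec k :
  first_gain k = q * first_gain (S k) + (if k <=? M then p * (1 - gamma) * pay_prob k else 0).
Proof.
  unfold first_gain, pay_prob.
  destruct (Nat.leb_spec k M), (Nat.leb_spec (S k) M); try lia.
  - replace (M - k)%nat with (S (M - S k)) by lia.
    pose proof one_minus_pq_neq_0; simpl; field; lra.
  - replace (M - k)%nat with 0%nat by lia.
    pose proof one_minus_pq_neq_0; simpl; field; lra.
  - ring.
Qed.

Lemma fork_gain_false_rec k :
  fork_gain k false
  = q * fork_gain (S k) false + (if k <=? M then p * gamma * pay_prob k else 0)
    + p * prev_fork_gain k.
Proof.
  unfold prev_fork_gain, fork_gain; rewrite !Rplus_0_r.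
  destruct (lt_eq_lt_dec k M) as [[Hlt| ->]|Hgt].
  - rewrite (proj2 (Nat.leb_le k M)), !Nat.min_l by lia.
    pose proof (gain_step_rec k Hlt).
    destruct k as [|k]; simpl; [|rewrite Nat.min_l by lia]; replace q with (1 - p) in * by lra; nra.
  - rewrite Nat.leb_refl, Nat.min_id, Nat.min_r by lia.
    pose proof gain_step_last.
    destruct M as [|M']; simpl; [|rewrite Nat.min_l by lia]; replace q with (1 - p) in * by lra; nra.
  - rewrite (proj2 (Nat.leb_gt k M)), !Nat.min_r by lia.
    destruct k as [|k]; [lia|]; rewrite Nat.min_r by lia.
    replace q with (1 - p) by lra; ring.
Qed.

Lemma counted_uncle_INR k f c :
  INR (counted_uncle n1 k f c) = if (f || c) && (k <=? M)%nat then 1 else 0.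
Proof. unfold counted_uncle; destruct (_ && _); reflexivity. Qed.

Lemma fork_gain_rec k f :
  fork_gain k f
  = q * fork_gain (S k) f
    + p * gamma * pay_prob k * INR (counted_uncle n1 k f true)
    + p * (1 - gamma) * pay_prob k * INR (counted_uncle n1 k f false)
    + p * prev_fork_gain k.
Proof.
  rewrite !counted_uncle_INR, orb_true_r; pose proof (fork_gain_false_rec k) as Hrec.
  unfold fork_gain in *; rewrite !Rplus_0_r in Hrec; destruct f; cbn [orb andb].
  - rewrite first_gain_rec; destruct (k <=? M)%nat; rewrite Hrec; ring.
  - destruct (k <=? M)%nat; rewrite Hrec; ring.
Qed.

Definition value (x : ustate) : R :=
  match x with
  | Start => q * (q * fork_gain 0 true + p * q)
  | AfterS => q * fork_gain 0 true + p * q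
  | AfterSH => q
  | Fork k f a b => INR a + pay_prob (S k) * INR b + fork_gain k f
  | Wait b => pay_prob 0 * INR b
  | WaitS b => (q + p * (q + p * gamma)) * INR b
  | WaitSH b => (q + p * gamma) * INR b
  | WaitSS _ b => INR b
  | Settled => 0
  end.

Lemma value_after_honest_in_fork k f a b c :
  INR (uncle_reward (Fork k f a b) (evH c)) + value (uncle_step n1 (Fork k f a b) (evH c))
  = INR a + pay_prob k * INR (b + counted_uncle n1 k f c) + prev_fork_gain k.
Proof. destruct k; simpl; ring. Qed.

Lemma value_bellman x :
  value x = step_mean p q gamma (fun e => INR (uncle_reward x e) + value (uncle_step n1 x e)).
Proof.
  unfold step_mean; destruct x as [| | |k f a b|b|b|b|k b|].
  - simpl; ring.
  - simpl; replace q with (1 - p) by lra; ring.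
  - simpl; replace q with (1 - p) by lra; ring.
  - rewrite !value_after_honest_in_fork; cbn [uncle_reward uncle_step value].
    rewrite (fork_gain_rec k f), pay_prob_S, !plus_INR, INR_0.
    replace q with (1 - p) by lra; ring.
  - simpl; unfold pay_prob, next_att; simpl; ring.
  - simpl; ring.
  - simpl; ring.
  - destruct k; simpl; replace q with (1 - p) by lra; ring.
  - simpl; ring.
Qed.

Definition payload (x : ustate) : nat :=
  match x with
  | Fork _ _ a b => a + b
  | Wait b | WaitS b | WaitSH b | WaitSS _ b => b
  | _ => 0
  end.

Lemma payload_step x e : (payload (uncle_step n1 x e) <= S (payload x))%nat.
Proof.
  assert (Hc : forall k f c, (counted_uncle n1 k f c <= 1)%nat)
    by (intros; unfold counted_uncle; destruct (_ && _); lia).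
  destruct x as [| | |k f a b|b|b|b|[|k] b|]; destruct e as [|c]; simpl; try lia.
  specialize (Hc k f c); destruct k; simpl; lia.
Qed.

(* Inside a fork, lyap is multiplied by lead_factor = 1/(2q) when the lead grows and divided
   by it when the lead shrinks; since 4pq <= 1 this contracts on average by 3/4 + pq. *)
Definition lead_factor : R := / (2 * q).
Definition drift_rate : R := 3 / 4 + p * q.

Definition lyap (x : ustate) : R :=
  match x with
  | Start => 64 | AfterS => 32 | AfterSH => 1
  | Fork k _ _ _ => 16 * lead_factor ^ k
  | Wait _ => 4 | WaitS _ => 2 | WaitSH _ => 1
  | WaitSS k _ => lead_factor ^ k
  | Settled => 0
  end.

Lemma four_pq_le_1 : 4 * (p * q) <= 1.
Proof. nra. Qed.

Lemma lead_factor_facts :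
  q * lead_factor = 1 / 2 /\ 2 * p <= lead_factor /\ 1 <= lead_factor.
Proof.
  pose proof four_pq_le_1; unfold lead_factor.
  split; [field; lra|].
  split; apply (Rmult_le_reg_l (2 * q)); try lra; rewrite Rinv_r by lra; nra.
Qed.

Lemma drift_rate_bounds : 3 / 4 <= drift_rate < 1.
Proof. pose proof four_pq_le_1; unfold drift_rate; nra. Qed.

Lemma lyap_nonneg x : 0 <= lyap x.
Proof.
  destruct lead_factor_facts as (_ & _ & Hlf).
  assert (Hpow : forall k, 1 <= lead_factor ^ k) by (intros; apply pow_R1_Rle; lra).
  destruct x; simpl; try lra; specialize (Hpow k); lra.
Qed.

Lemma lyap_drift x :
  step_mean p q gamma (fun e => lyap (uncle_step n1 x e)) <= drift_rate * lyap x.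
Proof.
  destruct lead_factor_facts as (Hqlf & Hplf & Hlf); pose proof drift_rate_bounds.
  assert (Hwalk : forall k, q * lead_factor ^ S (S k) + p * lead_factor ^ k
                            <= drift_rate * lead_factor ^ S k).
  { intros k; assert (0 <= lead_factor ^ k) by (apply pow_le; lra).
    replace (q * lead_factor ^ S (S k))
      with (q * lead_factor * lead_factor * lead_factor ^ k) by (simpl; ring).
    replace (drift_rate * lead_factor ^ S k)
      with (3 / 4 * lead_factor * lead_factor ^ k + p * (q * lead_factor) * lead_factor ^ k)
      by (unfold drift_rate; simpl; ring).
    rewrite Hqlf; nra. }
  unfold step_mean; destruct x as [| | |[|k] f a b|b|b|b|[|k] b|]; simpl; try nra.
  - specialize (Hwalk k); simpl in Hwalk; nra.
  - specialize (Hwalk k); simpl in Hwalk; nra.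
Qed.

Lemma pay_prob_bounds k : 0 <= pay_prob k <= 1.
Proof.
  assert (0 <= q + p * gamma <= 1) by nra.
  assert (0 <= q + p * (q + p * gamma) <= 1) by nra.
  assert (0 <= next_att <= 1) by (unfold next_att; nra).
  assert (0 <= p ^ k <= 1) by (split; [apply pow_le | rewrite <- (pow1 k); apply pow_incr]; lra).
  unfold pay_prob; nra.
Qed.

Lemma fork_gain_bounded : exists B, forall k f, Rabs (fork_gain k f) <= B.
Proof.
  assert (Hconst : forall f k, (S M <= k)%nat -> fork_gain k f = fork_gain (S M) f).
  { intros f k Hk; unfold fork_gain, first_gain.
    rewrite !Nat.min_r, (proj2 (Nat.leb_gt k M)), (proj2 (Nat.leb_gt (S M) M)) by lia.
    reflexivity. }
  exists (sum_f_R0 (fun j => Rabs (fork_gain j true)) (S M)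
          + sum_f_R0 (fun j => Rabs (fork_gain j false)) (S M)).
  intros k f.
  pose proof (eventually_const_abs_le (fun j => fork_gain j true) (S M) (Hconst true) k).
  pose proof (eventually_const_abs_le (fun j => fork_gain j false) (S M) (Hconst false) k).
  pose proof (cond_pos_sum (fun j => Rabs (fork_gain j true)) (S M) (fun j => Rabs_pos _)).
  pose proof (cond_pos_sum (fun j => Rabs (fork_gain j false)) (S M) (fun j => Rabs_pos _)).
  destruct f; simpl in *; lra.
Qed.

Lemma value_bound :
  exists K, 0 <= K /\ forall x, Rabs (value x) <= K * (1 + INR (payload x)) * lyap x.
Proof.
  destruct fork_gain_bounded as [B HB].
  destruct lead_factor_facts as (_ & _ & Hlf).
  assert (Hpow : forall k, 1 <= lead_factor ^ k) by (intros; apply pow_R1_Rle; lra).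
  assert (HB0 : 0 <= B)
    by (pose proof (HB 0%nat true); pose proof (Rabs_pos (fork_gain 0 true)); lra).
  set (K := 1 + B + Rabs (value Start) + Rabs (value AfterS)).
  pose proof (Rabs_pos (value Start)); pose proof (Rabs_pos (value AfterS)).
  exists K; split; [unfold K; lra|].
  assert (Hscale : forall y l, 0 <= y -> 1 <= l -> y + B <= K * (1 + y) * l).
  { intros y l Hy Hl; assert (y + B <= K * (1 + y)) by (unfold K; nra).
    assert (0 <= K * (1 + y)) by (unfold K; nra); nra. }
  assert (Hcoef : forall c y, 0 <= c <= 1 -> 0 <= y -> Rabs (c * y) <= y)
    by (intros c y Hc Hy; rewrite Rabs_pos_eq by nra; nra).
  intros x; destruct x as [| | |k f a b|b|b|b|k b|]; cbn [payload lyap]; rewrite ?INR_0.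
  - unfold K; lra.
  - unfold K; lra.
  - simpl; rewrite Rabs_pos_eq by lra; unfold K; lra.
  - simpl; rewrite plus_INR; pose proof (pos_INR a); pose proof (pos_INR b).
    pose proof (Hcoef _ (INR b) (pay_prob_bounds (S k)) (pos_INR b)); pose proof (HB k f).
    pose proof (Rabs_triang (INR a + pay_prob (S k) * INR b) (fork_gain k f)).
    pose proof (Rabs_triang (INR a) (pay_prob (S k) * INR b)).
    rewrite (Rabs_pos_eq (INR a)) in * by lra.
    pose proof (Hscale (INR a + INR b) (16 * lead_factor ^ k)); specialize (Hpow k); lra.
  - simpl; pose proof (Hcoef _ (INR b) (pay_prob_bounds 0) (pos_INR b)).
    pose proof (Hscale (INR b) 4 (pos_INR b)); lra.
  - simpl; assert (Hc : 0 <= q + p * (q + p * gamma) <= 1) by nra.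
    pose proof (Hcoef _ (INR b) Hc (pos_INR b)); pose proof (Hscale (INR b) 2 (pos_INR b)); lra.
  - simpl; assert (Hc : 0 <= q + p * gamma <= 1) by nra.
    pose proof (Hcoef _ (INR b) Hc (pos_INR b)); pose proof (Hscale (INR b) 1 (pos_INR b)); lra.
  - simpl; rewrite Rabs_pos_eq by apply pos_INR.
    pose proof (Hscale (INR b) (lead_factor ^ k) (pos_INR b) (Hpow k)); lra.
  - simpl; rewrite Rabs_R0; unfold K; lra.
Qed.

Lemma total_reward_uncle_gain x s :
  total_reward (uncle_step n1) (fun y e => INR (uncle_reward y e)) x s = INR (uncle_gain n1 x s).
Proof.
  revert x; induction s as [|e s IH]; intros x; simpl; [reflexivity|].
  rewrite IH, plus_INR; reflexivity.
Qed.

Lemma uncle_gain_cv :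
  Un_cv (fun n => expect p q gamma (fun s => INR (uncle_gain n1 Start s)) n) (value Start).
Proof.
  destruct value_bound as (K & HK & Hbound).
  apply Un_cv_ext with (fun n => expect p q gamma
    (total_reward (uncle_step n1) (fun y e => INR (uncle_reward y e)) Start) n).
  { intros n; apply expect_ext; apply total_reward_uncle_gain. }
  pose proof drift_rate_bounds.
  apply (expect_total_reward_cv _ _ _ p q gamma) with lyap drift_rate payload K;
    auto using value_bellman, lyap_nonneg, lyap_drift, payload_step; lra.
Qed.

Lemma value_start_formula :
  value Start =
    q + q ^ 3 * gamma / (p - q)
     - p * q ^ 2 / (p - q) * (q / p) ^ (S (S M) - 1) * gamma
     - q ^ (S (S M) + 1) * (1 - gamma)
     - (p ^ 2 * q
        + (p + (1 - gamma) * p ^ 2 * q)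
          * (q ^ 2 / p * (1 - q ^ (S (S M) - 1)) * gamma
             + (1 - gamma) * p * q ^ 2 * (1 - (p * q) ^ (S (S M) - 1)) / (1 - p * q))).
Proof.
  unfold value, fork_gain, first_gain, gain_step, next_att; simpl Nat.min; simpl sum_f_R0.
  replace (S (S M) - 1)%nat with (S M) by lia.
  replace (S (S M) + 1)%nat with (S (S (S M))) by lia.
  rewrite Nat.sub_0_r; cbn [pow Nat.leb].
  pose proof one_minus_pq_neq_0; pose proof one_minus_ratio_neq_0.
  replace q with (1 - p) in * by lra.
  field; lra.
Qed.

End UncleValue.

Theorem corollary2 (p q gamma : R) (n1 : nat) :
  0 < q -> q < p -> p + q = 1 -> 0 <= gamma <= 1 -> (2 <= n1)%nat ->
  Un_cv (fun N => ExpUs_N p q gamma n1 N)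
    (q + q ^ 3 * gamma / (p - q)
     - p * q ^ 2 / (p - q) * (q / p) ^ (n1 - 1) * gamma
     - q ^ (n1 + 1) * (1 - gamma)
     - (p ^ 2 * q
        + (p + (1 - gamma) * p ^ 2 * q)
          * (q ^ 2 / p * (1 - q ^ (n1 - 1)) * gamma
             + (1 - gamma) * p * q ^ 2 * (1 - (p * q) ^ (n1 - 1)) / (1 - p * q)))).
Proof.
  intros Hq Hqp Hpq Hgamma Hn1.
  destruct n1 as [|[|M]]; [lia|lia|].
  rewrite <- (value_start_formula p q gamma M) by lra.
  apply Un_cv_ext with (fun n => expect p q gamma (fun s => INR (uncle_gain (S (S M)) Start s)) n).
  - intros n; apply expect_ext; intros s; rewrite Us_prefix_uncle_gain by lia; reflexivity.
  - apply uncle_gain_cv; lra.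
Qed.
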